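(* Let $p,q>0$, $x\ge0$, $0\le y\le1$. Then both $y_k=B_{p,k}(x,y)$ and $y_k=\bar B_{p,k}(x,y)$ satisfy the four-term recurrence $$d_3y_{q+3}+d_2y_{q+2}+d_1y_{q+1}+d_0y_q=0,$$ where $$d_0=-(p+q)(1-y)^2,\quad d_1=(1-y)\left((p+q)(1-y)+p+2q+2+\tfrac12xy\right),$$ $$d_2=-(1-y)\left(p+2q+2+\tfrac12xy\right)-q-2,\quad d_3=q+2 .$$
   Context: For $p,q>0$ and $0\le y\le 1$, $I_y(p,q)=\frac{1}{B(p,q)}\int_0^y t^{p-1}(1-t)^{q-1}\,dt$ is the regularized incomplete beta function, with $B(p,q)=\Gamma(p)\Gamma(q)/\Gamma(p+q)$. The cumulative noncentral beta distribution is $B_{p,q}(x,y)=e^{-x/2}\sum_{j=0}^\infty \frac{1}{j!}\left(\frac x2\right)^j I_y(p+j,q)$ for $x\ge0$, and its complement is $\bar B_{p,q}(x,y)=1-B_{p,q}(x,y)$. *)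

From Stdlib Require Import Reals Lra ClassicalEpsilon Factorial.
Open Scope R_scope.

Definition beta_integrand (p q t : R) : R :=
  Rpower t (p - 1) * Rpower (1 - t) (q - 1).

Definition improper_RInt (f : R -> R) (a b l : R) : Prop :=
  forall eps, 0 < eps -> exists delta, 0 < delta /\
    forall u v, a < u < a + delta -> b - delta < v < b -> u <= v ->
      exists pr : Riemann_integrable f u v, Rabs (RiemannInt pr - l) < eps.

Definition improper_RInt_val (f : R -> R) (a b : R) : R :=
  epsilon (inhabits 0) (fun l => improper_RInt f a b l).

Definition Beta (p q : R) : R := improper_RInt_val (beta_integrand p q) 0 1.

Definition incbeta (y p q : R) : R :=
  if Rle_dec y 0 then 0
  else improper_RInt_val (beta_integrand p q) 0 y / Beta p q.

Definition series_val (a : nat -> R) : R :=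
  epsilon (inhabits 0) (fun l => infinite_sum a l).

Definition ncbeta (p q x y : R) : R :=
  exp (- x / 2) *
  series_val (fun j => (x / 2) ^ j / INR (fact j) * incbeta y (p + INR j) q).

Definition ncbeta_bar (p q x y : R) : R := 1 - ncbeta p q x y.

From Stdlib Require Import Reals Lra ClassicalEpsilon Factorial.
From Coquelicot Require Import Coquelicot.
Open Scope R_scope.

(* Write B_y(a,b) for the integral of t^(a-1) (1-t)^(b-1) over (0,y).  Since
   d/dt [t^a (1-t)^b] = t^(a-1) (1-t)^(b-1) (a - (a+b) t), integrating over (0,y)
   gives the contiguous relations
     (a+b) B_y(a,b+1) = b B_y(a,b) + y^a (1-y)^b,
     (a+b) B_y(a+1,b) = a B_y(a,b) - y^a (1-y)^b,
   hence B(a,b+1) = b/(a+b) B(a,b), B(a+1,b) = a/(a+b) B(a,b) (take y = 1) and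
   I_y(a,b+1) = I_y(a,b) + y^a (1-y)^b / (b B(a,b)).  With these, the recurrence
   combination of the j-th terms of the four series is (1-y)^2/(q+1) (U_j - U_(j+1))
   where U_j = j (p+j-1) w_j (I_y(p+j,q+1) - I_y(p+j,q)) and w_j = (x/2)^j / j!;
   as U_0 = 0 and U_j -> 0, the combination of the series vanishes.  The
   complement follows because d0 + d1 + d2 + d3 = 0.  The improper integrals
   exist because the integrand is positive and, near 0 and near 1, dominated by
   a multiple of the derivative of t^a (1-t)^b. *)

(** * Improper integrals over an open interval *)

Lemma filter_prod_open_interval a b (P : R -> Prop) : a < b ->
  (forall t, a < t < b -> P t) ->
  filter_prod (at_right a) (at_left b)
    (fun uv => forall t, Rmin (fst uv) (snd uv) <= t <= Rmax (fst uv) (snd uv) -> P t).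
Proof.
  intros Hab HP.
  assert (Hd : 0 < b - a) by lra.
  apply (Filter_prod _ _ _ (fun u => a < u < b) (fun v => a < v < b)).
  - exists (mkposreal _ Hd); intros u Hu Hau; cbn in *.
    apply Rabs_lt_between' in Hu; lra.
  - exists (mkposreal _ Hd); intros v Hv Hvb; cbn in *.
    apply Rabs_lt_between' in Hv; lra.
  - intros u v Hu Hv t Ht; cbn in Ht; apply HP; split.
    + apply Rlt_le_trans with (2 := proj1 Ht), Rmin_glb_lt; lra.
    + apply Rle_lt_trans with (1 := proj2 Ht), Rmax_lub_lt; lra.
Qed.

Lemma is_RInt_gen_open_interval_iff f a b L :
  is_RInt_gen f (at_right a) (at_left b) L <->
  forall eps, 0 < eps -> exists d, 0 < d /\
    forall u v, a < u < a + d -> b - d < v < b ->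
      ex_RInt f u v /\ Rabs (RInt f u v - L) < eps.
Proof.
  unfold is_RInt_gen; rewrite filterlimi_locally; split.
  - intros H eps Heps.
    destruct (H (mkposreal _ Heps)) as [Pu Pv [du Hdu] [dv Hdv] HPuv].
    exists (Rmin du dv); split; [apply Rmin_pos; apply cond_pos|].
    intros u v Hu Hv.
    assert (Hu' : Pu u).
    { apply Hdu; [|lra]. apply Rabs_lt_between'.
      pose proof (Rmin_l du dv); cbn; lra. }
    assert (Hv' : Pv v).
    { apply Hdv; [|lra]. apply Rabs_lt_between'.
      pose proof (Rmin_r du dv); cbn; lra. }
    destruct (HPuv u v Hu' Hv') as [l [Hl Hball]]; cbn in Hl.
    split; [exists l; exact Hl|].
    rewrite (is_RInt_unique _ _ _ _ Hl). exact Hball.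
  - intros H eps.
    destruct (H eps (cond_pos eps)) as [d [Hd Hint]].
    apply (Filter_prod _ _ _ (fun u => a < u < a + d) (fun v => b - d < v < b)).
    + exists (mkposreal _ Hd); intros u Hu Hau; cbn in *.
      apply Rabs_lt_between' in Hu; lra.
    + exists (mkposreal _ Hd); intros v Hv Hvb; cbn in *.
      apply Rabs_lt_between' in Hv; lra.
    + intros u v Hu Hv; cbn.
      destruct (Hint u v Hu Hv) as [Hex Hball].
      exists (RInt f u v); split; [exact (RInt_correct _ _ _ Hex)|exact Hball].
Qed.

Lemma improper_RInt_iff_is_RInt_gen f a b L : a < b ->
  improper_RInt f a b L <-> is_RInt_gen f (at_right a) (at_left b) L.
Proof.
  intros Hab; rewrite is_RInt_gen_open_interval_iff; split.
  - intros H eps Heps.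
    destruct (H eps Heps) as [d [Hd Hint]].
    exists (Rmin d ((b - a) / 2)); split; [apply Rmin_pos; lra|].
    intros u v Hu Hv.
    pose proof (Rmin_l d ((b - a) / 2)); pose proof (Rmin_r d ((b - a) / 2)).
    destruct (Hint u v ltac:(lra) ltac:(lra) ltac:(lra)) as [pr Hpr].
    split; [exact (ex_RInt_Reals_1 _ _ _ pr)|].
    rewrite (RInt_Reals _ _ _ pr); exact Hpr.
  - intros H eps Heps.
    destruct (H eps Heps) as [d [Hd Hint]].
    exists d; split; [exact Hd|].
    intros u v Hu Hv _.
    destruct (Hint u v Hu Hv) as [Hex Hball].
    exists (ex_RInt_Reals_0 _ _ _ Hex).
    rewrite <- RInt_Reals; exact Hball.
Qed.

Lemma is_RInt_gen_open_interval_unique (f g : R -> R) a b (l1 l2 : R) : a < b ->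
  (forall t, a < t < b -> f t = g t) ->
  is_RInt_gen f (at_right a) (at_left b) l1 ->
  is_RInt_gen g (at_right a) (at_left b) l2 -> l1 = l2.
Proof.
  intros Hab Hfg H1 H2.
  assert (Hunique : forall l : R, is_RInt_gen g (at_right a) (at_left b) l ->
                      RInt_gen g (at_right a) (at_left b) = l).
  { apply (@is_RInt_gen_unique R_CompleteNormedModule); apply Proper_StrongProper;
      [apply at_right_proper_filter|apply at_left_proper_filter]. }
  rewrite <- (Hunique l2 H2); symmetry; apply Hunique.
  apply (is_RInt_gen_ext f g); [|exact H1].
  apply (filter_imp (fun uv =>
           forall t, Rmin (fst uv) (snd uv) <= t <= Rmax (fst uv) (snd uv) -> f t = g t)).
  - intros uv Huv t Ht; apply Huv; lra.
  - apply filter_prod_open_interval; assumption.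
Qed.

Lemma improper_RInt_val_is_RInt_gen f a b L : a < b ->
  is_RInt_gen f (at_right a) (at_left b) L -> improper_RInt_val f a b = L.
Proof.
  intros Hab HL.
  assert (Hex : exists l, improper_RInt f a b l)
    by (exists L; apply improper_RInt_iff_is_RInt_gen; assumption).
  pose proof (epsilon_spec (inhabits 0) _ Hex) as Hval.
  apply improper_RInt_iff_is_RInt_gen in Hval; [|exact Hab].
  exact (is_RInt_gen_open_interval_unique f f a b _ _ Hab (fun _ _ => eq_refl) Hval HL).
Qed.

Lemma RInt_le_RInt_superinterval f u v u' v' :
  (forall t, u' < t < v' -> 0 <= f t) -> ex_RInt f u' v' ->
  u' <= u -> u <= v -> v <= v' -> RInt f u v <= RInt f u' v'.
Proof.
  intros Hf Hex Hu Huv Hv.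
  assert (Hex_u : ex_RInt f u v') by (apply (ex_RInt_Chasles_2 f u'); [lra|exact Hex]).
  assert (Hex_uv : ex_RInt f u v) by (apply (ex_RInt_Chasles_1 f u v v'); [lra|exact Hex_u]).
  assert (Hex_v : ex_RInt f v v') by (apply (ex_RInt_Chasles_2 f u); [lra|exact Hex_u]).
  assert (Hex_u' : ex_RInt f u' u) by (apply (ex_RInt_Chasles_1 f u' u v'); [lra|exact Hex]).
  rewrite <- (RInt_Chasles f u' u v'), <- (RInt_Chasles f u v v'); trivial.
  assert (0 <= RInt f u' u) by (apply RInt_ge_0; trivial; intros; apply Hf; lra).
  assert (0 <= RInt f v v') by (apply RInt_ge_0; trivial; intros; apply Hf; lra).
  cbn -[RInt]; lra.
Qed.

Lemma RInt_le_is_RInt_gen f a b L u v :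
  (forall t, a < t < b -> 0 <= f t) ->
  is_RInt_gen f (at_right a) (at_left b) L ->
  a < u -> u <= v -> v < b -> RInt f u v <= L.
Proof.
  intros Hf HL Hu Huv Hv.
  apply Rle_plus_epsilon; intros eps Heps.
  destruct (proj1 (is_RInt_gen_open_interval_iff f a b L) HL eps Heps) as [d [Hd Hint]].
  set (u' := a + Rmin d (u - a) / 2); set (v' := b - Rmin d (b - v) / 2).
  assert (0 < Rmin d (u - a) <= d /\ Rmin d (u - a) <= u - a)
    by (split; [split; [apply Rmin_pos|apply Rmin_l]|apply Rmin_r]; lra).
  assert (0 < Rmin d (b - v) <= d /\ Rmin d (b - v) <= b - v)
    by (split; [split; [apply Rmin_pos|apply Rmin_l]|apply Rmin_r]; lra).
  destruct (Hint u' v') as [Hex Hball]; [unfold u'; lra|unfold v'; lra|].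
  apply Rabs_lt_between' in Hball.
  pose proof (RInt_le_RInt_superinterval f u v u' v') as Hsub.
  enough (RInt f u v <= RInt f u' v') by lra.
  apply Hsub; trivial; [|unfold u'; lra|unfold v'; lra].
  intros t Ht; apply Hf; unfold u', v' in Ht; lra.
Qed.

Lemma is_RInt_gen_le_bound f a b L M : a < b ->
  (forall u v, a < u -> u <= v -> v < b -> RInt f u v <= M) ->
  is_RInt_gen f (at_right a) (at_left b) L -> L <= M.
Proof.
  intros Hab HM HL.
  apply Rle_plus_epsilon; intros eps Heps.
  destruct (proj1 (is_RInt_gen_open_interval_iff f a b L) HL eps Heps) as [d [Hd Hint]].
  set (e := Rmin d (b - a) / 2).
  assert (0 < Rmin d (b - a) <= d /\ Rmin d (b - a) <= b - a)
    by (split; [split; [apply Rmin_pos|apply Rmin_l]|apply Rmin_r]; lra).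
  destruct (Hint (a + e) (b - e)) as [_ Hball]; [unfold e; lra|unfold e; lra|].
  apply Rabs_lt_between' in Hball.
  assert (RInt f (a + e) (b - e) <= M) by (apply HM; unfold e; lra).
  lra.
Qed.

Lemma ex_RInt_gen_nonneg_bounded f a b M : a < b ->
  (forall u v, a < u -> u <= v -> v < b -> ex_RInt f u v) ->
  (forall t, a < t < b -> 0 <= f t) ->
  (forall u v, a < u -> u <= v -> v < b -> RInt f u v <= M) ->
  ex_RInt_gen f (at_right a) (at_left b).
Proof.
  intros Hab Hex Hf HM.
  set (E := fun z => exists u v, a < u /\ u <= v /\ v < b /\ z = RInt f u v).
  assert (HEbound : bound E) by (exists M; intros z (u & v & Hu & Huv & Hv & ->); auto).
  assert (HEinhabited : exists z, E z).
  { exists (RInt f ((a + b) / 2) ((a + b) / 2)), ((a + b) / 2), ((a + b) / 2).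
    repeat split; lra. }
  destruct (completeness E HEbound HEinhabited) as [L [HLub HLlub]].
  exists L; apply is_RInt_gen_open_interval_iff; intros eps Heps.
  assert (Happrox : exists u0 v0, a < u0 /\ u0 <= v0 /\ v0 < b /\ L - eps < RInt f u0 v0).
  { apply Classical_Prop.NNPP; intros Hnot.
    enough (L <= L - eps) by lra.
    apply HLlub; intros z (u & v & Hu & Huv & Hv & ->).
    apply Rnot_lt_le; intros Hlt; apply Hnot; exists u, v; auto. }
  destruct Happrox as (u0 & v0 & Hu0 & Huv0 & Hv0 & Hclose).
  exists (Rmin (u0 - a) (b - v0)); split; [apply Rmin_pos; lra|].
  intros u v Hu Hv.
  pose proof (Rmin_l (u0 - a) (b - v0)); pose proof (Rmin_r (u0 - a) (b - v0)).
  split; [apply Hex; lra|].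
  assert (RInt f u v <= L) by (apply HLub; exists u, v; repeat split; lra).
  assert (RInt f u0 v0 <= RInt f u v).
  { apply RInt_le_RInt_superinterval; try lra; [|apply Hex; lra].
    intros t Ht; apply Hf; lra. }
  apply Rabs_lt_between'; lra.
Qed.

Lemma RInt_le_scal_antiderivative f G g k u v : u <= v ->
  (forall t, u <= t <= v -> is_derive G t (g t)) ->
  (forall t, u <= t <= v -> continuous g t) ->
  ex_RInt f u v ->
  (forall t, u < t < v -> f t <= k * g t) ->
  RInt f u v <= k * (G v - G u).
Proof.
  intros Huv HG Hg Hex Hfg.
  assert (HgInt : is_RInt g u v (G v - G u)).
  { apply (is_RInt_derive G g); intros t Ht;
      rewrite Rmin_left, Rmax_right in Ht by lra; auto. }
  assert (HkgInt : is_RInt (fun t => k * g t) u v (k * (G v - G u)))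
    by exact (is_RInt_scal _ _ _ k _ HgInt).
  rewrite <- (is_RInt_unique _ _ _ _ HkgInt).
  apply RInt_le; trivial; eexists; exact HkgInt.
Qed.

(** * The incomplete Beta integral *)

Lemma beta_integrand_pos a b t : 0 < beta_integrand a b t.
Proof. apply Rmult_lt_0_compat; apply exp_pos. Qed.

Lemma beta_integrand_succ_l a b t : 0 < t < 1 ->
  beta_integrand (a + 1) b t = t * beta_integrand a b t.
Proof.
  intros Ht; unfold beta_integrand.
  replace (a + 1 - 1) with (1 + (a - 1)) by ring.
  rewrite Rpower_plus, Rpower_1 by lra; ring.
Qed.

Lemma beta_integrand_succ_r a b t : 0 < t < 1 ->
  beta_integrand a (b + 1) t = (1 - t) * beta_integrand a b t.
Proof.
  intros Ht; unfold beta_integrand.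
  replace (b + 1 - 1) with (1 + (b - 1)) by ring.
  rewrite Rpower_plus, Rpower_1 by lra; ring.
Qed.

Lemma continuous_beta_integrand a b t : 0 < t < 1 ->
  continuous (beta_integrand a b) t.
Proof.
  intros Ht; apply (@ex_derive_continuous R_AbsRing R_NormedModule).
  unfold beta_integrand, Rpower; auto_derive; lra.
Qed.

Lemma ex_RInt_beta_integrand a b u v : 0 < u -> u <= v -> v < 1 ->
  ex_RInt (beta_integrand a b) u v.
Proof.
  intros Hu Huv Hv; apply (@ex_RInt_continuous R_CompleteNormedModule); intros t Ht.
  rewrite Rmin_left, Rmax_right in Ht by lra.
  apply continuous_beta_integrand; lra.
Qed.

(* [t^a (1-t)^b], written through the integrand so that it vanishes at [t = 1]:
   [Rpower 0 c] is [1], not [0]. *)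
Definition beta_monomial a b t := t * (1 - t) * beta_integrand a b t.

Definition beta_monomial_derive a b t := beta_integrand a b t * (a - (a + b) * t).

Lemma is_derive_beta_monomial a b t : 0 < t < 1 ->
  is_derive (beta_monomial a b) t (beta_monomial_derive a b t).
Proof.
  intros Ht; unfold beta_monomial, beta_monomial_derive, beta_integrand, Rpower.
  auto_derive; [lra|].
  replace (1 + - t) with (1 - t) by ring; field; lra.
Qed.

Lemma continuous_beta_monomial_derive a b t : 0 < t < 1 ->
  continuous (beta_monomial_derive a b) t.
Proof.
  intros Ht; apply (@ex_derive_continuous R_AbsRing R_NormedModule).
  unfold beta_monomial_derive, beta_integrand, Rpower; auto_derive; lra.
Qed.

Lemma beta_monomial_Rpower a b t : 0 < t < 1 ->
  beta_monomial a b t = Rpower t a * Rpower (1 - t) b.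
Proof.
  intros Ht; unfold beta_monomial, beta_integrand.
  rewrite <- (Rpower_1 t) at 1 by lra; rewrite <- (Rpower_1 (1 - t)) at 1 by lra.
  replace a with (1 + (a - 1)) at 2 by ring; replace b with (1 + (b - 1)) at 2 by ring.
  rewrite !Rpower_plus; ring.
Qed.

Lemma beta_monomial_succ_l a b y : 0 < y <= 1 ->
  beta_monomial (a + 1) b y = y * beta_monomial a b y.
Proof.
  intros Hy; destruct (Req_dec y 1) as [->|Hy1]; [unfold beta_monomial; ring|].
  unfold beta_monomial; rewrite beta_integrand_succ_l by lra; ring.
Qed.

Lemma beta_monomial_succ_r a b y : 0 < y <= 1 ->
  beta_monomial a (b + 1) y = (1 - y) * beta_monomial a b y.
Proof.
  intros Hy; destruct (Req_dec y 1) as [->|Hy1]; [unfold beta_monomial; ring|].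
  unfold beta_monomial; rewrite beta_integrand_succ_r by lra; ring.
Qed.

Lemma Rpower_at_right_0 c : 0 < c ->
  filterlim (fun t => Rpower t c) (at_right 0) (locally 0).
Proof.
  intros Hc; unfold Rpower.
  apply (filterlim_comp _ _ _ (fun t => c * ln t) exp _ (Rbar_locally m_infty)).
  - eapply filterlim_comp; [exact is_lim_ln_0|].
    replace m_infty with (Rbar_mult c m_infty) at 2.
    + apply filterlim_Rbar_mult_l.
    + simpl; destruct (Rle_dec 0 c) as [H|H]; [|lra].
      destruct (Rle_lt_or_eq_dec 0 c H); [reflexivity|lra].
  - exact is_lim_exp_m.
Qed.

Lemma beta_monomial_sym a b t : beta_monomial a b t = beta_monomial b a (1 - t).
Proof.
  unfold beta_monomial, beta_integrand.
  replace (1 - (1 - t)) with t by ring; ring.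
Qed.

Lemma beta_monomial_at_right_0 a b : 0 < a -> 0 < b ->
  filterlim (beta_monomial a b) (at_right 0) (locally 0).
Proof.
  intros Ha Hb; change (locally 0) with (Rbar_locally (Finite 0)).
  apply (filterlim_le_le (fun _ => 0) _ (fun t => Rpower t a)).
  - exists (mkposreal 1 Rlt_0_1); intros t Ht Ht0; cbn in *.
    apply Rabs_lt_between' in Ht.
    rewrite beta_monomial_Rpower by lra.
    assert (Hle1 : Rpower (1 - t) b <= 1).
    { apply Rle_trans with (Rpower 1 b); [apply Rle_Rpower_l; lra|].
      unfold Rpower; rewrite ln_1, Rmult_0_r, exp_0; lra. }
    pose proof (exp_pos (a * ln t)); pose proof (exp_pos (b * ln (1 - t))).
    unfold Rpower in *; nra.
  - apply filterlim_const.
  - exact (Rpower_at_right_0 a Ha).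
Qed.

Lemma beta_monomial_at_left a b y : 0 < a -> 0 < b -> 0 < y <= 1 ->
  filterlim (beta_monomial a b) (at_left y) (locally (beta_monomial a b y)).
Proof.
  intros Ha Hb Hy; destruct (Req_dec y 1) as [->|Hy1].
  - replace (beta_monomial a b 1) with 0 by (unfold beta_monomial; ring).
    apply (filterlim_ext (fun t => beta_monomial b a (1 - t)));
      [intros t; symmetry; apply beta_monomial_sym|].
    eapply filterlim_comp; [|exact (beta_monomial_at_right_0 b a Hb Ha)].
    intros P [d Hd]; exists d; intros t Ht Ht1; cbn in *.
    apply Hd; [|lra].
    apply Rabs_lt_between' in Ht; apply Rabs_lt_between'; cbn in *; lra.
  - eapply filterlim_filter_le_1; [apply filter_le_within|].
    apply (@ex_derive_continuous R_AbsRing R_NormedModule).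
    eexists; apply is_derive_beta_monomial; lra.
Qed.

Lemma locally_open_unit_interval t : 0 < t < 1 -> locally t (fun s => 0 < s < 1).
Proof.
  intros Ht.
  assert (Hr : 0 < Rmin t (1 - t)) by (apply Rmin_pos; lra).
  exists (mkposreal _ Hr); intros s Hs; cbn in Hs.
  apply Rabs_lt_between' in Hs.
  pose proof (Rmin_l t (1 - t)); pose proof (Rmin_r t (1 - t)); lra.
Qed.

Lemma Derive_beta_monomial a b t : 0 < t < 1 ->
  Derive (beta_monomial a b) t = beta_monomial_derive a b t.
Proof. intros Ht; apply is_derive_unique, is_derive_beta_monomial, Ht. Qed.

Lemma is_RInt_gen_beta_monomial_derive a b y : 0 < a -> 0 < b -> 0 < y <= 1 ->
  is_RInt_gen (beta_monomial_derive a b) (at_right 0) (at_left y) (beta_monomial a b y).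
Proof.
  intros Ha Hb Hy.
  assert (Hinside : forall (P : R -> Prop), (forall t, 0 < t < 1 -> P t) ->
            filter_prod (at_right 0) (at_left y) (fun uv =>
              forall t, Rmin (fst uv) (snd uv) <= t <= Rmax (fst uv) (snd uv) -> P t))
    by (intros P HP; apply filter_prod_open_interval; [|intros t Ht; apply HP]; lra).
  apply (is_RInt_gen_ext (Derive (beta_monomial a b))).
  { apply (filter_imp (fun uv =>
             forall t, Rmin (fst uv) (snd uv) <= t <= Rmax (fst uv) (snd uv) ->
               Derive (beta_monomial a b) t = beta_monomial_derive a b t)).
    - intros uv Huv t Ht; apply Huv; lra.
    - apply Hinside, Derive_beta_monomial. }
  rewrite <- (Rminus_0_r (beta_monomial a b y)).
  apply is_RInt_gen_Derive.
  - apply Hinside; intros t Ht; eexists; apply is_derive_beta_monomial, Ht.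
  - apply Hinside; intros t Ht.
    apply (continuous_ext_loc _ (beta_monomial_derive a b)).
    + apply (filter_imp (fun s => 0 < s < 1)); [|apply locally_open_unit_interval, Ht].
      intros s Hs; symmetry; apply Derive_beta_monomial, Hs.
    + apply continuous_beta_monomial_derive, Ht.
  - apply beta_monomial_at_right_0; assumption.
  - apply beta_monomial_at_left; assumption.
Qed.

Lemma beta_monomial_pos a b t : 0 < t < 1 -> 0 < beta_monomial a b t.
Proof.
  intros Ht; unfold beta_monomial.
  pose proof (beta_integrand_pos a b t); apply Rmult_lt_0_compat; [nra|lra].
Qed.

Lemma RInt_beta_integrand_le_near_0 a b u v : 0 < a -> 0 < b ->
  0 < u -> u <= v -> (a + b) * v <= a / 2 ->
  RInt (beta_integrand a b) u v <= 2 / a * beta_monomial a b v.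
Proof.
  intros Ha Hb Hu Huv Hv.
  assert (Hv1 : v < 1) by nra.
  assert (Hk : 0 < 2 / a) by (apply Rdiv_lt_0_compat; lra).
  apply Rle_trans with (2 / a * (beta_monomial a b v - beta_monomial a b u)).
  - apply (RInt_le_scal_antiderivative _ _ (beta_monomial_derive a b));
      [lra|intros; apply is_derive_beta_monomial; lra
      |intros; apply continuous_beta_monomial_derive; lra
      |apply ex_RInt_beta_integrand; lra|].
    intros t Ht; unfold beta_monomial_derive.
    pose proof (beta_integrand_pos a b t).
    replace (2 / a * (beta_integrand a b t * (a - (a + b) * t)))
      with (beta_integrand a b t + 2 / a * beta_integrand a b t * (a / 2 - (a + b) * t))
      by (field; lra).
    enough (0 <= 2 / a * beta_integrand a b t * (a / 2 - (a + b) * t)) by lra.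
    apply Rmult_le_pos; [apply Rmult_le_pos|]; nra.
  - pose proof (beta_monomial_pos a b u ltac:(lra)); nra.
Qed.

Lemma RInt_beta_integrand_le_near_1 a b u v : 0 < a -> 0 < b ->
  u <= v -> v < 1 -> a + b / 2 <= (a + b) * u ->
  RInt (beta_integrand a b) u v <= 2 / b * beta_monomial a b u.
Proof.
  intros Ha Hb Huv Hv Hu.
  assert (Hu0 : 0 < u) by nra.
  assert (Hk : 0 < 2 / b) by (apply Rdiv_lt_0_compat; lra).
  apply Rle_trans with (- (2 / b) * (beta_monomial a b v - beta_monomial a b u)).
  - apply (RInt_le_scal_antiderivative _ _ (beta_monomial_derive a b));
      [lra|intros; apply is_derive_beta_monomial; lra
      |intros; apply continuous_beta_monomial_derive; lra
      |apply ex_RInt_beta_integrand; lra|].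
    intros t Ht; unfold beta_monomial_derive.
    pose proof (beta_integrand_pos a b t).
    replace (- (2 / b) * (beta_integrand a b t * (a - (a + b) * t)))
      with (beta_integrand a b t + 2 / b * beta_integrand a b t * ((a + b) * t - a - b / 2))
      by (field; lra).
    enough (0 <= 2 / b * beta_integrand a b t * ((a + b) * t - a - b / 2)) by lra.
    apply Rmult_le_pos; [apply Rmult_le_pos|]; nra.
  - pose proof (beta_monomial_pos a b v ltac:(lra)); nra.
Qed.

Lemma RInt_beta_integrand_bounded a b : 0 < a -> 0 < b ->
  exists M, forall u v, 0 < u -> u <= v -> v < 1 -> RInt (beta_integrand a b) u v <= M.
Proof.
  intros Ha Hb.
  set (m0 := a / (2 * (a + b))); set (m1 := 1 - b / (2 * (a + b))).
  assert (Hm0 : (a + b) * m0 = a / 2) by (unfold m0; field; lra).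
  assert (Hm1 : (a + b) * m1 = a + b / 2) by (unfold m1; field; lra).
  assert (Hm : 0 < m0 < m1 /\ m1 < 1) by (split; [split|]; nra).
  exists (2 / a * beta_monomial a b m0 + RInt (beta_integrand a b) m0 m1
          + 2 / b * beta_monomial a b m1).
  intros u v Hu Huv Hv.
  set (u' := Rmin u m0); set (v' := Rmax v m1).
  assert (Hu' : 0 < u' <= u /\ u' <= m0)
    by (unfold u'; split; [split; [apply Rmin_glb_lt|apply Rmin_l]|apply Rmin_r]; lra).
  assert (Hv' : v <= v' < 1 /\ m1 <= v')
    by (unfold v'; split; [split; [apply Rmax_l|apply Rmax_lub_lt]|apply Rmax_r]; lra).
  apply Rle_trans with (RInt (beta_integrand a b) u' v').
  { apply RInt_le_RInt_superinterval; try lra; [|apply ex_RInt_beta_integrand; lra].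
    intros; apply Rlt_le, beta_integrand_pos. }
  rewrite <- (RInt_Chasles (beta_integrand a b) u' m0 v'),
    <- (RInt_Chasles (beta_integrand a b) m0 m1 v') by (apply ex_RInt_beta_integrand; lra).
  pose proof (RInt_beta_integrand_le_near_0 a b u' m0 Ha Hb ltac:(lra) ltac:(lra) ltac:(lra)).
  pose proof (RInt_beta_integrand_le_near_1 a b m1 v' Ha Hb ltac:(lra) ltac:(lra) ltac:(lra)).
  cbn -[RInt]; lra.
Qed.

Definition Beta_inc a b y := improper_RInt_val (beta_integrand a b) 0 y.

Lemma is_RInt_gen_Beta_inc a b y : 0 < a -> 0 < b -> 0 < y <= 1 ->
  is_RInt_gen (beta_integrand a b) (at_right 0) (at_left y) (Beta_inc a b y).
Proof.
  intros Ha Hb Hy.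
  destruct (RInt_beta_integrand_bounded a b Ha Hb) as [M HM].
  destruct (ex_RInt_gen_nonneg_bounded (beta_integrand a b) 0 y M) as [L HL];
    [lra|intros; apply ex_RInt_beta_integrand; lra
    |intros; apply Rlt_le, beta_integrand_pos|intros; apply HM; lra|].
  unfold Beta_inc; rewrite (improper_RInt_val_is_RInt_gen _ _ _ L); [exact HL|lra|exact HL].
Qed.

Lemma Beta_inc_succ_r a b y : 0 < a -> 0 < b -> 0 < y <= 1 ->
  (a + b) * Beta_inc a (b + 1) y = b * Beta_inc a b y + beta_monomial a b y.
Proof.
  intros Ha Hb Hy.
  apply (is_RInt_gen_open_interval_unique
           (fun t => (a + b) * beta_integrand a (b + 1) t)
           (fun t => b * beta_integrand a b t + beta_monomial_derive a b t) 0 y); [lra| | |].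
  - intros t Ht; unfold beta_monomial_derive; rewrite beta_integrand_succ_r by lra; ring.
  - apply (is_RInt_gen_scal (V := R_NormedModule)), is_RInt_gen_Beta_inc; lra.
  - apply (is_RInt_gen_plus (V := R_NormedModule));
      [apply (is_RInt_gen_scal (V := R_NormedModule)), is_RInt_gen_Beta_inc
      |apply is_RInt_gen_beta_monomial_derive]; assumption.
Qed.

Lemma Beta_inc_succ_l a b y : 0 < a -> 0 < b -> 0 < y <= 1 ->
  (a + b) * Beta_inc (a + 1) b y = a * Beta_inc a b y - beta_monomial a b y.
Proof.
  intros Ha Hb Hy.
  apply (is_RInt_gen_open_interval_unique
           (fun t => (a + b) * beta_integrand (a + 1) b t)
           (fun t => a * beta_integrand a b t - beta_monomial_derive a b t) 0 y); [lra| | |].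
  - intros t Ht; unfold beta_monomial_derive; rewrite beta_integrand_succ_l by lra; ring.
  - apply (is_RInt_gen_scal (V := R_NormedModule)), is_RInt_gen_Beta_inc; lra.
  - apply (is_RInt_gen_minus (V := R_NormedModule));
      [apply (is_RInt_gen_scal (V := R_NormedModule)), is_RInt_gen_Beta_inc
      |apply is_RInt_gen_beta_monomial_derive]; assumption.
Qed.

Lemma Beta_Beta_inc a b : Beta a b = Beta_inc a b 1.
Proof. reflexivity. Qed.

Lemma incbeta_Beta_inc y a b : 0 < y -> incbeta y a b = Beta_inc a b y / Beta a b.
Proof. intros Hy; unfold incbeta; destruct (Rle_dec y 0); [lra|reflexivity]. Qed.

Lemma RInt_le_Beta_inc a b y u v : 0 < a -> 0 < b -> 0 < y <= 1 ->
  0 < u -> u <= v -> v < y -> RInt (beta_integrand a b) u v <= Beta_inc a b y.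
Proof.
  intros Ha Hb Hy Hu Huv Hv.
  apply (RInt_le_is_RInt_gen _ 0 y); trivial.
  - intros; apply Rlt_le, beta_integrand_pos.
  - apply is_RInt_gen_Beta_inc; assumption.
Qed.

Lemma Beta_inc_nonneg a b y : 0 < a -> 0 < b -> 0 < y <= 1 -> 0 <= Beta_inc a b y.
Proof.
  intros Ha Hb Hy.
  pose proof (RInt_le_Beta_inc a b y (y / 2) (y / 2) Ha Hb Hy) as Hle.
  rewrite RInt_point in Hle; apply Hle; lra.
Qed.

Lemma Beta_inc_le_Beta a b y : 0 < a -> 0 < b -> 0 < y <= 1 -> Beta_inc a b y <= Beta a b.
Proof.
  intros Ha Hb Hy.
  apply (is_RInt_gen_le_bound (beta_integrand a b) 0 y); [lra| |].
  - intros u v Hu Huv Hv; apply RInt_le_Beta_inc; lra.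
  - apply is_RInt_gen_Beta_inc; assumption.
Qed.

Lemma Beta_pos a b : 0 < a -> 0 < b -> 0 < Beta a b.
Proof.
  intros Ha Hb.
  apply Rlt_le_trans with (RInt (beta_integrand a b) (1 / 4) (3 / 4));
    [|apply RInt_le_Beta_inc; lra].
  apply RInt_gt_0; [lra|intros; apply beta_integrand_pos|].
  intros; apply continuous_beta_integrand; lra.
Qed.

Lemma Beta_succ_r a b : 0 < a -> 0 < b -> Beta a (b + 1) = b / (a + b) * Beta a b.
Proof.
  intros Ha Hb.
  pose proof (Beta_inc_succ_r a b 1 Ha Hb ltac:(lra)) as Hrec.
  rewrite <- !Beta_Beta_inc in Hrec; unfold beta_monomial in Hrec.
  apply (Rmult_eq_reg_l (a + b)); [rewrite Hrec; field|]; lra.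
Qed.

Lemma Beta_succ_l a b : 0 < a -> 0 < b -> Beta (a + 1) b = a / (a + b) * Beta a b.
Proof.
  intros Ha Hb.
  pose proof (Beta_inc_succ_l a b 1 Ha Hb ltac:(lra)) as Hrec.
  rewrite <- !Beta_Beta_inc in Hrec; unfold beta_monomial in Hrec.
  apply (Rmult_eq_reg_l (a + b)); [rewrite Hrec; field|]; lra.
Qed.

Lemma incbeta_succ_r y a b : 0 < a -> 0 < b -> 0 < y <= 1 ->
  incbeta y a (b + 1) = incbeta y a b + beta_monomial a b y / (b * Beta a b).
Proof.
  intros Ha Hb Hy.
  pose proof (Beta_inc_succ_r a b y Ha Hb Hy) as Hrec.
  pose proof (Beta_pos a b Ha Hb).
  rewrite !incbeta_Beta_inc, Beta_succ_r by lra.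
  replace (Beta_inc a (b + 1) y) with ((b * Beta_inc a b y + beta_monomial a b y) / (a + b))
    by (rewrite <- Hrec; field; lra).
  field; lra.
Qed.

Lemma incbeta_bounds y a b : 0 < a -> 0 < b -> 0 <= y <= 1 -> 0 <= incbeta y a b <= 1.
Proof.
  intros Ha Hb Hy.
  destruct (Req_dec y 0) as [->|Hy0];
    [unfold incbeta; destruct (Rle_dec 0 0); lra|].
  rewrite incbeta_Beta_inc by lra.
  pose proof (Beta_pos a b Ha Hb).
  pose proof (Beta_inc_nonneg a b y Ha Hb ltac:(lra)).
  pose proof (Beta_inc_le_Beta a b y Ha Hb ltac:(lra)).
  split; [apply Rdiv_le_0_compat; lra|].
  apply Rmult_le_reg_r with (Beta a b); [lra|]; unfold Rdiv.
  rewrite Rmult_assoc, Rinv_l; lra.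
Qed.

(** * The noncentral Beta series *)

Lemma series_val_is_series a l : is_series a l -> series_val a = l.
Proof.
  intros Hl; unfold series_val.
  assert (Hex : exists l', infinite_sum a l') by (exists l; apply is_series_Reals, Hl).
  apply (uniqueness_sum a);
    [exact (epsilon_spec (inhabits 0) _ Hex)|apply is_series_Reals, Hl].
Qed.

Lemma is_series_telescope (U : nat -> R) (l : R) : is_lim_seq U l ->
  is_series (fun n => U n - U (S n)) (U O - l).
Proof.
  intros HU.
  assert (Hpartial : forall N, sum_n (fun n => U n - U (S n)) N = U O - U (S N)).
  { induction N as [|N IHN]; [apply sum_O|].
    rewrite sum_Sn, IHN; cbn; ring. }
  change (is_lim_seq (sum_n (fun n => U n - U (S n))) (U O - l)).
  apply (is_lim_seq_ext (fun N => U O - U (S N))); [intros; symmetry; apply Hpartial|].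
  apply is_lim_seq_minus'; [apply is_lim_seq_const|apply (proj1 (is_lim_seq_incr_1 U l)), HU].
Qed.

Lemma is_series_exp_term z : is_series (fun n => z ^ n / INR (fact n)) (exp z).
Proof.
  apply (is_series_ext (fun n => scal (pow_n z n) (/ INR (fact n)))), is_exp_Reals.
  intros n; rewrite pow_n_pow; reflexivity.
Qed.

Lemma is_lim_seq_affine_mul_exp_term c z :
  is_lim_seq (fun n => (c + INR n) * (z ^ n / INR (fact n))) 0.
Proof.
  assert (Hterm : is_lim_seq (fun n => z ^ n / INR (fact n)) 0)
    by apply is_lim_seq_Reals, cv_speed_pow_fact.
  apply (proj2 (is_lim_seq_incr_1 _ 0)).
  apply (is_lim_seq_ext
           (fun n => c * (z ^ S n / INR (fact (S n))) + z * (z ^ n / INR (fact n)))).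
  - intros n; rewrite fact_simpl, mult_INR, S_INR; cbn [pow].
    pose proof (INR_fact_neq_0 n); pose proof (pos_INR n).
    field; lra.
  - replace (Finite 0) with (Finite (c * 0 + z * 0)) by (f_equal; ring).
    apply is_lim_seq_plus'; apply (is_lim_seq_scal_l _ _ 0); [|exact Hterm].
    exact (proj1 (is_lim_seq_incr_1 (fun n => z ^ n / INR (fact n)) 0) Hterm).
Qed.

Definition recurrence_form p q x y (F : R -> R) :=
  (q + 2) * F (q + 3)
  + (- (1 - y) * (p + 2 * q + 2 + x * y / 2) - q - 2) * F (q + 2)
  + (1 - y) * ((p + q) * (1 - y) + p + 2 * q + 2 + x * y / 2) * F (q + 1)
  + - (p + q) * (1 - y) ^ 2 * F q.

Lemma recurrence_form_complement p q x y F :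
  recurrence_form p q x y (fun b => 1 - F b) = - recurrence_form p q x y F.
Proof. unfold recurrence_form; ring. Qed.

Lemma recurrence_form_scal p q x y c F :
  recurrence_form p q x y (fun b => c * F b) = c * recurrence_form p q x y F.
Proof. unfold recurrence_form; ring. Qed.

Section NoncentralBetaSeries.

Variables p q x y : R.
Hypotheses (Hp : 0 < p) (Hq : 0 < q) (Hx : 0 <= x) (Hy : 0 < y <= 1).

Definition ncbeta_term b j := (x / 2) ^ j / INR (fact j) * incbeta y (p + INR j) b.

Definition ncbeta_gap j := ncbeta_term (q + 1) j - ncbeta_term q j.

Definition ncbeta_telescoper j := INR j * (p + INR j - 1) * ncbeta_gap j.

Lemma ncbeta_term_bounds b j : 0 < b ->
  0 <= ncbeta_term b j <= (x / 2) ^ j / INR (fact j).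
Proof.
  intros Hb; unfold ncbeta_term.
  assert (0 <= (x / 2) ^ j / INR (fact j))
    by (apply Rdiv_le_0_compat; [apply pow_le; lra|apply INR_fact_lt_0]).
  pose proof (incbeta_bounds y (p + INR j) b ltac:(pose proof (pos_INR j); lra) Hb ltac:(lra)).
  nra.
Qed.

Lemma recurrence_form_ncbeta_term j :
  recurrence_form p q x y (fun b => ncbeta_term b j)
  = (1 - y) ^ 2 / (q + 1) * (ncbeta_telescoper j - ncbeta_telescoper (S j)).
Proof.
  pose proof (pos_INR j) as Hj.
  unfold recurrence_form, ncbeta_telescoper, ncbeta_gap, ncbeta_term.
  replace (q + 3) with (q + 1 + 1 + 1) by ring; replace (q + 2) with (q + 1 + 1) by ring.
  rewrite S_INR; replace (p + (INR j + 1)) with (p + INR j + 1) by ring.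
  rewrite !incbeta_succ_r, !beta_monomial_succ_r, !Beta_succ_r,
    beta_monomial_succ_l, Beta_succ_l by lra.
  rewrite fact_simpl, mult_INR, S_INR; cbn [pow].
  pose proof (INR_fact_neq_0 j); pose proof (Beta_pos (p + INR j) q ltac:(lra) Hq).
  field; repeat split; lra.
Qed.

Lemma ncbeta_telescoper_succ j :
  ncbeta_telescoper (S j) = x * y / 2 * (p + q + INR j) * ncbeta_gap j.
Proof.
  pose proof (pos_INR j) as Hj.
  unfold ncbeta_telescoper, ncbeta_gap, ncbeta_term.
  rewrite S_INR; replace (p + (INR j + 1)) with (p + INR j + 1) by ring.
  rewrite !incbeta_succ_r, beta_monomial_succ_l, Beta_succ_l by lra.
  rewrite fact_simpl, mult_INR, S_INR; cbn [pow].
  pose proof (INR_fact_neq_0 j); pose proof (Beta_pos (p + INR j) q ltac:(lra) Hq).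
  field; repeat split; lra.
Qed.

Lemma is_lim_seq_ncbeta_telescoper : is_lim_seq ncbeta_telescoper 0.
Proof.
  set (bound j := x / 2 * ((p + q + INR j) * ((x / 2) ^ j / INR (fact j)))).
  assert (Hbound : is_lim_seq bound 0).
  { replace (Finite 0) with (Rbar_mult (x / 2) 0) by (cbn; f_equal; ring).
    apply is_lim_seq_scal_l, is_lim_seq_affine_mul_exp_term. }
  apply (proj2 (is_lim_seq_incr_1 _ 0)).
  apply (is_lim_seq_le_le (fun j => - bound j) _ bound).
  - intros j; rewrite ncbeta_telescoper_succ; unfold ncbeta_gap, bound.
    pose proof (ncbeta_term_bounds (q + 1) j ltac:(lra)).
    pose proof (ncbeta_term_bounds q j Hq).
    set (w := (x / 2) ^ j / INR (fact j)) in *; set (k := p + q + INR j).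
    assert (Hk : 0 < k) by (pose proof (pos_INR j); unfold k; lra).
    assert (Hxy : 0 <= x * y <= x) by (split; nra).
    assert (0 <= x * y / 2 * k <= x / 2 * k) by (split; nra).
    replace (x / 2 * (k * w)) with (x / 2 * k * w) by ring.
    set (c := x * y / 2 * k) in *; set (C := x / 2 * k) in *.
    split; nra.
  - replace (Finite 0) with (Rbar_opp 0) by (cbn; f_equal; ring).
    apply (is_lim_seq_opp bound 0), Hbound.
  - exact Hbound.
Qed.

Lemma is_series_ncbeta_term b : 0 < b ->
  is_series (ncbeta_term b) (series_val (ncbeta_term b)).
Proof.
  intros Hb.
  assert (Hex : ex_series (ncbeta_term b)).
  { apply (@ex_series_le R_AbsRing R_CompleteNormedModule _
             (fun j => (x / 2) ^ j / INR (fact j))).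
    - intros j; pose proof (ncbeta_term_bounds b j Hb).
      rewrite Rabs_pos_eq by lra; lra.
    - exists (exp (x / 2)); apply is_series_exp_term. }
  rewrite (series_val_is_series _ (Series (ncbeta_term b))); apply Series_correct, Hex.
Qed.

Lemma recurrence_form_ncbeta_series :
  recurrence_form p q x y (fun b => series_val (ncbeta_term b)) = 0.
Proof.
  set (combined j := recurrence_form p q x y (fun b => ncbeta_term b j)).
  assert (Hsum : is_series combined
                   (recurrence_form p q x y (fun b => series_val (ncbeta_term b)))).
  { unfold combined, recurrence_form.
    repeat apply (is_series_plus (V := R_NormedModule));
      apply (is_series_scal_l (V := R_NormedModule)), is_series_ncbeta_term; lra. }
  assert (Htelescope : is_series combined 0).
  { apply (is_series_ext (fun j => (1 - y) ^ 2 / (q + 1)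
             * (ncbeta_telescoper j - ncbeta_telescoper (S j)))).
    { intros j; symmetry; apply recurrence_form_ncbeta_term. }
    replace 0 with ((1 - y) ^ 2 / (q + 1) * (ncbeta_telescoper O - 0))
      by (unfold ncbeta_telescoper; cbn; ring).
    apply (is_series_scal_l (V := R_NormedModule)), is_series_telescope,
      is_lim_seq_ncbeta_telescoper. }
  rewrite <- (is_series_unique _ _ Hsum); exact (is_series_unique _ _ Htelescope).
Qed.

End NoncentralBetaSeries.

Lemma ncbeta_at_0 p b x : ncbeta p b x 0 = 0.
Proof.
  unfold ncbeta; rewrite (series_val_is_series _ 0); [ring|].
  apply (is_series_ext (fun _ => 0)).
  - intros j; unfold incbeta; destruct (Rle_dec 0 0); [|lra].
    symmetry; apply Rmult_0_r.
  - change (is_lim_seq (sum_n (fun _ => 0)) 0).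
    apply (is_lim_seq_ext (fun _ => 0)); [|apply is_lim_seq_const].
    intros n; rewrite sum_n_const; ring.
Qed.

Lemma recurrence_form_ncbeta p q x y : 0 < p -> 0 < q -> 0 <= x -> 0 <= y <= 1 ->
  recurrence_form p q x y (fun b => ncbeta p b x y) = 0.
Proof.
  intros Hp Hq Hx Hy; destruct (Req_dec y 0) as [->|Hy0].
  - unfold recurrence_form; rewrite !ncbeta_at_0; ring.
  - change (recurrence_form p q x y
              (fun b => exp (- x / 2) * series_val (ncbeta_term p x y b)) = 0).
    rewrite recurrence_form_scal, recurrence_form_ncbeta_series by lra; ring.
Qed.

Theorem mainTheorem8 (p q x y : R) :
  0 < p -> 0 < q -> 0 <= x -> 0 <= y <= 1 ->
  let d0 := - (p + q) * (1 - y) ^ 2 in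
  let d1 := (1 - y) * ((p + q) * (1 - y) + p + 2 * q + 2 + x * y / 2) in
  let d2 := - (1 - y) * (p + 2 * q + 2 + x * y / 2) - q - 2 in
  let d3 := q + 2 in
  (d3 * ncbeta p (q + 3) x y + d2 * ncbeta p (q + 2) x y
     + d1 * ncbeta p (q + 1) x y + d0 * ncbeta p q x y = 0) /\
  (d3 * ncbeta_bar p (q + 3) x y + d2 * ncbeta_bar p (q + 2) x y
     + d1 * ncbeta_bar p (q + 1) x y + d0 * ncbeta_bar p q x y = 0).
Proof.
  intros Hp Hq Hx Hy d0 d1 d2 d3.
  pose proof (recurrence_form_ncbeta p q x y Hp Hq Hx Hy) as Hrec.
  split; [exact Hrec|].
  change (recurrence_form p q x y (fun b => 1 - ncbeta p b x y) = 0).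
  rewrite recurrence_form_complement, Hrec; ring.
Qed.
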